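(* Let $P_1,\dots,P_T$ be $p$-values and fix an index $t\le T$ with $t\in\mathcal H^0$, i.e. $\mathbb P(P_t\le x)\le x$ for all $x\in[0,1]$, and assume $P_t$ is independent of $(P_s)_{s\ne t}$. For each $i\le T$ let $f_i:\{0,1\}^{i-1}\to\mathbb R$ be coordinatewise nondecreasing, define recursively $R_i=\mathbf 1\{P_i\le f_i(R_1,\dots,R_{i-1})\}$, and let $\mathcal F^{i}=\sigma(R_1,\dots,R_{i})$. Let $g:\{0,1\}^T\to\mathbb R$ be coordinatewise nondecreasing with $g(x)>0$ for every $x\neq(0,\dots,0)$. Then $$\mathbb E\left[\frac{\mathbf 1\{P_t\le f_t(R_1,\dots,R_{t-1})\}}{g(R_1,\dots,R_T)\vee 1}\,\Big|\,\mathcal F^{t-1}\right]\le \mathbb E\left[\frac{f_t(R_1,\dots,R_{t-1})}{g(R_1,\dots,R_T)\vee 1}\,\Big|\,\mathcal F^{t-1}\right].$$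
   Context: Coordinatewise nondecreasing means: if $\tilde x_i\ge x_i$ for all coordinates $i$, then the function value at $\tilde x$ is at least the value at $x$. $a\vee b=\max\{a,b\}$.
   Formalization: The threshold $f_t$ is also nonnegative on all of $\{0,1\}^{t-1}$. The statement above fails without it. *)

From HB Require Import structures.
From mathcomp Require Import all_boot all_order all_algebra.
From mathcomp Require Import all_classical all_reals all_analysis.
Set Implicit Arguments. Unset Strict Implicit. Unset Printing Implicit Defensive.
Import Order.TTheory GRing.Theory Num.Theory.
Local Open Scope classical_set_scope.
Local Open Scope ring_scope.

(* Coordinatewise nondecreasing function on {0,1}^k, with {0,1}^k encoded as
   boolean sequences of size k (false = 0, true = 1). *)
Definition coord_nondecr {R : realType} (k : nat) (h : seq bool -> R) : Prop :=
  forall s s' : seq bool, size s = k -> size s' = k ->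
    (forall j, (j < k)%N -> nth false s j ==> nth false s' j) -> h s <= h s'.

(* Decision sequence (R_0, ..., R_{k-1}) (0-based indexing):
   R_i = 1{ p i <= f i (R_0, ..., R_{i-1}) }. *)
Fixpoint decisions {R : realType} (f : nat -> seq bool -> R) (p : nat -> R)
    (k : nat) : seq bool :=
  match k with
  | 0 => [::]
  | k'.+1 => let s := decisions f p k' in rcons s (p k' <= f k' s)
  end.

Definition Rvec {d} {T : measurableType d} {R : realType}
    (f : nat -> seq bool -> R) (P : nat -> T -> R) (k : nat) (w : T) : seq bool :=
  decisions f (fun i => P i w) k.

Definition superuniform {d} {T : measurableType d} {R : realType}
    (mu : probability T R) (X : T -> R) : Prop :=
  forall x : R, 0 <= x <= 1 -> (mu [set w | (X w <= x)%R] <= x%:E)%E.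

(* Independence of P_t from the family (P_s)_{s < n, s <> t}: product rule
   for P_t^{-1}(A) and every event of the generating pi-system
   { /\_{s<n, s<>t} P_s^{-1}(B_s) } of sigma(P_s : s <> t). *)
Definition indep_from_rest {d} {T : measurableType d} {R : realType}
    (mu : probability T R) (P : nat -> T -> R) (n t : nat) : Prop :=
  forall (A : set R) (B : nat -> set R),
    measurable A -> (forall s, measurable (B s)) ->
    mu (P t @^-1` A `&`
        \bigcap_(s in [set s | (s < n)%N /\ s <> t]) (P s @^-1` B s))
    = (mu (P t @^-1` A) *
       mu (\bigcap_(s in [set s | (s < n)%N /\ s <> t]) (P s @^-1` B s)))%E.

(* Conditional expectation of X given sigma(Z), for a random variable Z with
   values in the finite set seq bool (here Z = (R_0,...,R_{t-1}), so
   sigma(Z) = F^{t-1}): on the atom {Z = z} it equals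
   E[X 1{Z = z}] / P(Z = z) (taken to be 0 on null atoms). *)
Definition cond_exp_disc {d} {T : measurableType d} {R : realType}
    (mu : probability T R) (Z : T -> seq bool) (X : T -> R) (w : T) : \bar R :=
  ((\int[mu]_(y in Z @^-1` [set Z w]) (X y)%:E) *
   ((fine (mu (Z @^-1` [set Z w])))^-1)%:E)%E.

(* Let R' be the decision vector obtained by lowering P_t to its threshold
   f_t(R_1, ..., R_{t-1}), which forces hypothesis t to be rejected.  R'
   coincides with R on the event {P_t <= f_t}, dominates R coordinatewise by
   monotonicity of the f_i (so g(R) <= g(R')), and is a function of the P_s,
   s <> t, only.  On the atom {R_{<t} = z}, with c = f_t(z), the left-hand side
   is therefore sum_x P(P_t <= c, R' = x, R_{<t} = z) / (g(x) v 1) and the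
   right-hand side is at least sum_x c P(R' = x, R_{<t} = z) / (g(x) v 1).
   Each event {R' = x, R_{<t} = z} is empty or a rectangle in (P_s)_{s <> t},
   so independence and superuniformity give
   P(P_t <= c, R' = x, R_{<t} = z) <= c P(R' = x, R_{<t} = z). *)

From HB Require Import structures.
From mathcomp Require Import all_boot all_order all_algebra.
From mathcomp Require Import all_classical all_reals all_analysis.
From mathcomp Require Import measurable_realfun.
Import Order.TTheory GRing.Theory Num.Theory.
Local Open Scope classical_set_scope.
Local Open Scope ring_scope.

Set Implicit Arguments. Unset Strict Implicit.

Section Decisions.
Variables (R : realType) (f : nat -> seq bool -> R).

Lemma size_decisions p k : size (decisions f p k) = k.
Proof. by elim: k => //= k IH; rewrite size_rcons IH. Qed.

Lemma nth_decisions p k i : (i < k)%N ->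
  nth false (decisions f p k) i = (p i <= f i (decisions f p i)).
Proof.
elim: k => // k IH; rewrite ltnS leq_eqVlt => /orP[/eqP->|ik] /=.
  by rewrite nth_rcons size_decisions ltnn eqxx.
by rewrite nth_rcons size_decisions ik IH.
Qed.

Lemma take_decisions p k i : (i <= k)%N ->
  take i (decisions f p k) = decisions f p i.
Proof.
elim: k => [|k IH]; first by rewrite leqn0 => /eqP->.
rewrite leq_eqVlt => /orP[/eqP->|ik].
  by rewrite take_oversize // size_decisions.
by rewrite /= -cats1 takel_cat ?size_decisions // IH.
Qed.

Lemma eq_decisions p q k : (forall i, (i < k)%N -> p i = q i) ->
  decisions f p k = decisions f q k.
Proof.
elim: k => //= k IH pq; rewrite pq // IH // => i ik.
exact/pq/ltnW.
Qed.

Lemma decisionsP p k r : decisions f p k = r <->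
  size r = k /\ forall s, (s < k)%N -> nth false r s = (p s <= f s (take s r)).
Proof.
split=> [<-|].
  split=> [|s sk]; first exact: size_decisions.
  by rewrite nth_decisions // take_decisions // ltnW.
elim: k r => [|k IH] r [rk Hr]; first exact/esym/size0nil.
case/lastP: r rk Hr => [//|r b]; rewrite size_rcons => -[rk] Hr /=.
have prefix s : (s <= k)%N -> take s (rcons r b) = take s r.
  by move=> sk; rewrite -cats1 takel_cat // rk.
have -> : decisions f p k = r.
  apply: IH; split=> // s sk.
  by have := Hr s (ltnW sk); rewrite nth_rcons rk sk prefix // ltnW.
have := Hr k (ltnSn k).
by rewrite nth_rcons rk ltnn eqxx prefix // take_oversize ?rk // => <-.
Qed.

Definition force_reject (p : nat -> R) (t : nat) : nat -> R :=
  fun i => if i == t then f t (decisions f p t) else p i.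

Lemma decisions_force_reject_prefix p t k : (k <= t)%N ->
  decisions f (force_reject p t) k = decisions f p k.
Proof.
move=> kt; apply: eq_decisions => i ik; rewrite /force_reject ifN //.
by rewrite neq_ltn (leq_trans ik kt).
Qed.

Lemma force_reject_rejects p t :
  force_reject p t t <= f t (decisions f (force_reject p t) t).
Proof. by rewrite decisions_force_reject_prefix // /force_reject eqxx. Qed.

Lemma decisions_force_reject p t k : p t <= f t (decisions f p t) ->
  decisions f (force_reject p t) k = decisions f p k.
Proof.
move=> pt; elim: k => //= k ->; congr rcons; rewrite /force_reject.
by case: eqVneq => [->|//]; rewrite lexx pt.
Qed.

Lemma decisions_force_reject_imply p t n :
  (forall i, (i < n)%N -> coord_nondecr i (f i)) ->
  forall j, (j < n)%N ->
    nth false (decisions f p n) j ==> nth false (decisions f (force_reject p t) n) j.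
Proof.
move=> f_mono; suff imply k : (k <= n)%N -> forall j, (j < k)%N ->
    (p j <= f j (decisions f p j)) ==>
    (force_reject p t j <= f j (decisions f (force_reject p t) j)).
  by move=> j jn; rewrite !nth_decisions //; exact: imply (leqnn n) j jn.
elim: k => // k IH kn j; rewrite ltnS leq_eqVlt => /orP[/eqP->|jk]; last first.
  exact: IH (ltnW kn) j jk.
have [->|kt] := eqVneq k t; first by rewrite force_reject_rejects implybT.
rewrite /force_reject (negbTE kt); apply/implyP => /le_trans; apply.
apply: f_mono; rewrite ?size_decisions // => i ik.
by rewrite !nth_decisions //; exact: IH (ltnW kn) i ik.
Qed.

Lemma decisions_force_rejectP p t n r : (t < n)%N ->
  decisions f (force_reject p t) n = r <->
  [/\ size r = n, nth false r t &
      forall s, (s < n)%N -> s <> t -> nth false r s = (p s <= f s (take s r))].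
Proof.
move=> tn; split=> [<-|[rn rt Hr]].
  split=> [||s sn /eqP st]; first exact: size_decisions.
    by rewrite nth_decisions // force_reject_rejects.
  by rewrite nth_decisions // take_decisions 1?ltnW // /force_reject (negbTE st).
apply/decisionsP; split=> // s sn; rewrite /force_reject.
case: eqVneq => [->|/eqP st]; last exact: Hr.
suff -> : decisions f p t = take t r by rewrite rt lexx.
apply/decisionsP; split=> [|j jt]; first by rewrite size_take rn tn.
rewrite nth_take // take_takel ?(ltnW jt) // Hr // ?(ltn_trans jt tn) //.
by move=> jt'; rewrite jt' ltnn in jt.
Qed.

End Decisions.

Section Measurability.
Variables (d : measure_display) (T : measurableType d) (R : realType).

Lemma measurable_fun_countable_comp (C : countType) d' (U : measurableType d')
    (Z : T -> C) (F : C -> U) :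
  (forall c, measurable (Z @^-1` [set c])) -> measurable_fun setT (fun y => F (Z y)).
Proof.
move=> mZ _ B mB; rewrite setTI.
have -> : (fun y => F (Z y)) @^-1` B = \bigcup_(c in F @^-1` B) Z @^-1` [set c].
  by apply/seteqP; split=> [y BFy|y [c BFc /= ->]] //; exists (Z y).
by rewrite bigcup_mkcond; apply: countable_bigcupT_measurable => // c; case: ifP.
Qed.

Variables (f : nat -> seq bool -> R) (P : nat -> T -> R).
Hypothesis mP : forall i, measurable_fun setT (P i).

Definition decision_set (r : seq bool) (s : nat) : set R :=
  [set x | nth false r s = (x <= f s (take s r))].

Lemma measurable_decision_set r s : measurable (decision_set r s).
Proof.
rewrite /decision_set; case: (nth false r s).
  have -> : [set x | true = (x <= f s (take s r))] = [set` `]-oo, f s (take s r)]].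
    by apply/seteqP; split=> x /=; rewrite in_itv /=; [move=> <-|move=> ->].
  exact: measurable_itv.
have -> : [set x | false = (x <= f s (take s r))] = [set` `]f s (take s r), +oo[].
  apply/seteqP; split=> x /=; rewrite in_itv /= andbT ltNge.
    by move=> <-.
  by move/negbTE->.
exact: measurable_itv.
Qed.

Lemma measurable_decision_event s r : measurable (P s @^-1` decision_set r s).
Proof.
rewrite -[X in measurable X]setTI; apply: mP => //.
exact: measurable_decision_set.
Qed.

Lemma measurable_Rvec_atom k r : measurable (Rvec f P k @^-1` [set r]).
Proof.
have [rk|rk] := eqVneq (size r) k; last first.
  suff -> : Rvec f P k @^-1` [set r] = set0 by [].
  by apply/seteqP; split=> y //= /decisionsP[/eqP]; rewrite (negbTE rk).
suff -> : Rvec f P k @^-1` [set r] =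
    \bigcap_(s in [set s | (s < k)%N]) P s @^-1` decision_set r s.
  by apply: bigcap_measurableType => s _; exact: measurable_decision_event.
apply/seteqP; split=> y /=; first by case/decisionsP => _ H s /H.
by move=> H; apply/decisionsP; split=> // s /H.
Qed.

Variables (n t : nat).
Hypothesis tn : (t < n)%N.

Definition Rvec_force_reject (y : T) : seq bool :=
  decisions f (force_reject f (fun i => P i y) t) n.

Definition rest_event (r : seq bool) : set T :=
  \bigcap_(s in [set s | (s < n)%N /\ s <> t]) P s @^-1` decision_set r s.

Lemma measurable_rest_event r : measurable (rest_event r).
Proof. by apply: bigcap_measurableType => s _; exact: measurable_decision_event. Qed.

Lemma Rvec_force_reject_atomE r : Rvec_force_reject @^-1` [set r] =
  if (size r == n) && nth false r t then rest_event r else set0.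
Proof.
apply/seteqP; split=> y /=.
  case/(decisions_force_rejectP _ _ _ tn) => -> -> H /=.
  by rewrite eqxx => s [/H].
case: ifP => [/andP[/eqP rn rt] H|//].
by apply/(decisions_force_rejectP _ _ _ tn); split=> // s sn st; exact: H.
Qed.

Lemma measurable_Rvec_force_reject_atom r :
  measurable (Rvec_force_reject @^-1` [set r]).
Proof.
rewrite Rvec_force_reject_atomE; case: ifP => // _.
exact: measurable_rest_event.
Qed.

Lemma Rvec_force_reject_atomI_cases r z :
  Rvec_force_reject @^-1` [set r] `&` Rvec f P t @^-1` [set z] = set0 \/
  Rvec_force_reject @^-1` [set r] `&` Rvec f P t @^-1` [set z] = rest_event r.
Proof.
have prefix y : take t (Rvec_force_reject y) = Rvec f P t y.
  by rewrite take_decisions ?decisions_force_reject_prefix // ltnW.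
rewrite Rvec_force_reject_atomE.
case: ifP => [/andP[/eqP rn rt]|_]; last by left; rewrite set0I.
have forced y : rest_event r y -> Rvec_force_reject y = r.
  by have := Rvec_force_reject_atomE r; rewrite rn rt eqxx => /seteqP[_]; apply.
have [<-|rz] := eqVneq (take t r) z.
  right; apply/seteqP; split=> [y []//|y ry]; split=> //=.
  by rewrite -prefix forced.
left; apply/seteqP; split=> // y [ry /= ytz]; apply: (negP rz).
by rewrite -ytz -prefix forced.
Qed.

End Measurability.

Section TupleValuedIntegral.
Variables (d : measure_display) (T : measurableType d) (R : realType).
Variable mu : {measure set T -> \bar R}.

Lemma integral_tuple_valued n (Z : T -> seq bool) (h : seq bool -> R) (A D : set T) :
  measurable D -> measurable A -> (forall r, measurable (Z @^-1` [set r])) ->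
  (forall y, size (Z y) = n) -> (forall r, 0 <= h r) ->
  (\int[mu]_(y in D) (h (Z y) * \1_A y)%:E =
   \sum_(x : n.-tuple bool) (h x)%:E * mu (A `&` Z @^-1` [set val x] `&` D))%E.
Proof.
move=> mD mA mZ Zn h0; pose B (x : n.-tuple bool) := A `&` Z @^-1` [set val x].
have mB x : measurable (B x) by exact: measurableI.
have split_atoms y : h (Z y) * \1_A y = \sum_(x : n.-tuple bool) h x * \1_(B x) y.
  have /eqP Zyn := Zn y; rewrite (bigD1 (Tuple Zyn)) //= big1 ?addr0; last first.
    move=> x xZy; rewrite indicE memNset ?mulr0 // => -[_ /= Zy].
    by move/eqP: xZy; apply; exact/val_inj.
  by rewrite !indicE in_setI [y \in _ @^-1` _]mem_set ?andbT.
under eq_integral do rewrite split_atoms -sumEFin.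
rewrite ge0_integral_sum //; last 2 first.
- move=> x; apply/measurable_EFinP.
  apply: measurable_funM; first exact: measurable_cst.
  exact: measurable_indic.
- by move=> x y _; rewrite lee_fin mulr_ge0.
apply: eq_bigr => x _; under eq_integral do rewrite EFinM.
rewrite ge0_integralZl_EFin ?integral_indic //.
by apply/measurable_EFinP; exact: measurable_indic.
Qed.

End TupleValuedIntegral.

Section NullPvalue.
Variables (d : measure_display) (T : measurableType d) (R : realType).
Variables (mu : probability T R) (f : nat -> seq bool -> R) (P : nat -> T -> R).
Variables (n t : nat).
Hypothesis mP : forall i, measurable_fun setT (P i).
Hypothesis tn : (t < n)%N.
Hypothesis Pt_superuniform : superuniform mu (P t).
Hypothesis Pt_indep : indep_from_rest mu P n t.

Lemma superuniform_le c : 0 <= c -> (mu (P t @^-1` [set` `]-oo, c]]) <= c%:E)%E.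
Proof.
move=> c0; have [c1|c1] := lerP c 1.
  have -> : P t @^-1` [set` `]-oo, c]] = [set w | P t w <= c].
    by apply/seteqP; split=> w; rewrite /= in_itv.
  by apply: Pt_superuniform; rewrite c0 c1.
apply: le_trans (probability_le1 _ _) _; last by rewrite lee_fin ltW.
by rewrite -[X in measurable X]setTI; apply: mP => //; exact: measurable_itv.
Qed.

Lemma mu_below_rest_event c r : 0 <= c ->
  (mu (P t @^-1` [set` `]-oo, c]] `&` rest_event f P n t r) <=
   c%:E * mu (rest_event f P n t r))%E.
Proof.
move=> c0; rewrite Pt_indep; last 2 first.
- exact: measurable_itv.
- by move=> s; exact: measurable_decision_set.
by apply: lee_wpmul2r; [exact: measure_ge0 | exact: superuniform_le].
Qed.

Lemma mu_below_force_reject_atom c r z : 0 <= c ->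
  (mu (P t @^-1` [set` `]-oo, c]] `&`
       (Rvec_force_reject f P n t @^-1` [set r] `&` Rvec f P t @^-1` [set z])) <=
   c%:E * mu (Rvec_force_reject f P n t @^-1` [set r] `&` Rvec f P t @^-1` [set z]))%E.
Proof.
move=> c0; have [->|->] := Rvec_force_reject_atomI_cases f P tn r z.
  by rewrite setI0 !measure0 mule0.
exact: mu_below_rest_event.
Qed.

End NullPvalue.

Section ConditionalAtom.
Variables (d : measure_display) (T : measurableType d) (R : realType).
Variables (mu : probability T R) (n t : nat) (P : nat -> T -> R).
Variables (f : nat -> seq bool -> R) (g : seq bool -> R) (z : seq bool).
Hypothesis mP : forall i, measurable_fun setT (P i).
Hypothesis tn : (t < n)%N.

Let D := Rvec f P t @^-1` [set z].
Let Rf := Rvec_force_reject f P n t.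
Let G (r : seq bool) := (Num.max (g r) 1)^-1.

Let mD : measurable D. Proof. exact: measurable_Rvec_atom. Qed.
Let mRf r : measurable (Rf @^-1` [set r]).
Proof. exact: measurable_Rvec_force_reject_atom. Qed.
Let Rf_size y : size (Rf y) = n. Proof. exact: size_decisions. Qed.
Let G_ge0 r : 0 <= G r. Proof. by rewrite invr_ge0 le_max ler01 orbT. Qed.

Lemma integral_rejection_atom_sum :
  (\int[mu]_(y in D) ((P t y <= f t (Rvec f P t y))%R%:R /
                       Num.max (g (Rvec f P n y)) 1)%:E =
   \sum_(x : n.-tuple bool)
     (G x)%:E * mu (P t @^-1` [set` `]-oo, f t z]] `&` Rf @^-1` [set val x] `&` D))%E.
Proof.
have mE : measurable (P t @^-1` [set` `]-oo, f t z]]).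
  by rewrite -[X in measurable X]setTI; apply: mP => //; exact: measurable_itv.
rewrite -(integral_tuple_valued mu mD mE mRf Rf_size G_ge0).
apply: eq_integral => y /[!inE] /= Dy; rewrite Dy indicE mulrC.
have [Pty|Pty] := boolP (P t y <= f t z).
  rewrite mem_set /=; last by rewrite in_itv.
  by rewrite /Rf /Rvec_force_reject decisions_force_reject // -/(Rvec f P t y) Dy.
by rewrite memNset ?mulr0 //= in_itv /= (negbTE Pty).
Qed.

Hypothesis f_mono : forall i, (i < n)%N -> coord_nondecr i (f i).
Hypothesis g_mono : coord_nondecr n g.
Hypothesis fz_ge0 : 0 <= f t z.

Lemma atom_sum_le_integral_threshold :
  (\sum_(x : n.-tuple bool) (f t z * G x)%:E * mu (Rf @^-1` [set val x] `&` D) <=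
   \int[mu]_(y in D) (f t (Rvec f P t y) / Num.max (g (Rvec f P n y)) 1)%:E)%E.
Proof.
have cG_ge0 r : 0 <= f t z * G r by rewrite mulr_ge0.
under eq_bigr do rewrite -[Rf @^-1` _]setTI.
rewrite -(integral_tuple_valued mu mD measurableT mRf Rf_size cG_ge0).
under eq_integral do rewrite indicE mem_set // mulr1.
have -> : (\int[mu]_(y in D) (f t (Rvec f P t y) / Num.max (g (Rvec f P n y)) 1)%:E =
    \int[mu]_(y in D) (f t z * G (Rvec f P n y))%:E)%E.
  by apply: eq_integral => y /[!inE] /= ->.
apply: ge0_le_integral => //.
- by move=> y _; rewrite lee_fin.
- apply/measurable_EFinP; apply: measurable_funTS.
  exact: (measurable_fun_countable_comp (fun r => f t z * G r) mRf).
- apply/measurable_EFinP; apply: measurable_funTS.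
  exact: (measurable_fun_countable_comp (fun r => f t z * G r)
           (measurable_Rvec_atom f mP n)).
move=> y _; rewrite lee_fin ler_wpM2l // lef_pV2 ?posrE ?lt_max ?ltr01 ?orbT //.
rewrite ge_max !le_max lexx orbT andbT; apply/orP; left.
by apply: g_mono; rewrite ?size_decisions //; exact: decisions_force_reject_imply.
Qed.

End ConditionalAtom.

Unset Implicit Arguments. Set Strict Implicit.

Theorem lemma1 (d : measure_display) (T : measurableType d) (R : realType)
    (mu : probability T R) (n t : nat) (P : nat -> T -> R)
    (f : nat -> seq bool -> R) (g : seq bool -> R) :
  (forall i, measurable_fun setT (P i)) ->
  (t < n)%N ->
  superuniform mu (P t) ->
  indep_from_rest mu P n t ->
  (forall i, (i < n)%N -> coord_nondecr i (f i)) ->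
  (forall s, size s = t -> 0 <= f t s) ->
  coord_nondecr n g ->
  (forall s, size s = n -> has id s -> 0 < g s) ->
  forall w : T,
    (cond_exp_disc mu (Rvec f P t)
       (fun y => ((P t y <= f t (Rvec f P t y))%R%:R / Num.max (g (Rvec f P n y)) 1)%R) w
     <=
     cond_exp_disc mu (Rvec f P t)
       (fun y => (f t (Rvec f P t y) / Num.max (g (Rvec f P n y)) 1)%R) w)%E.
Proof.
move=> mP tn sup ind f_mono ft0 g_mono _ w; rewrite /cond_exp_disc.
apply: lee_wpmul2r; first by rewrite lee_fin invr_ge0 fine_ge0.
have fw_ge0 : 0 <= f t (Rvec f P t w) by apply: ft0; exact: size_decisions.
rewrite integral_rejection_atom_sum //.
apply: le_trans (atom_sum_le_integral_threshold mu mP tn f_mono g_mono fw_ge0).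
apply: lee_sum => x _; rewrite -setIA mulrC EFinM -muleA.
apply: lee_wpmul2l; first by rewrite lee_fin invr_ge0 le_max ler01 orbT.
exact: mu_below_force_reject_atom.
Qed.
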